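(* Let $(X,\mathscr{A},\mu)$ be a $\sigma$-finite measure space, $\phi$ a nonsingular transformation of $X$ with $0<\mathsf{h}_\phi<\infty$ a.e. $[\mu]$, and $P\colon X\times\mathfrak{B}(\mathbb{R}_+)\to[0,1]$ an $\mathscr{A}$-measurable family of probability measures satisfying (CC): $\mathsf{E}(P(\cdot,\sigma))(x)=\dfrac{\int_\sigma t\,P(\phi(x),\mathrm{d}t)}{\mathsf{h}_\phi(\phi(x))}$ for $\mu$-a.e. $x\in X$, for every $\sigma\in\mathfrak{B}(\mathbb{R}_+)$. Then for every $n\in\mathbb{Z}_+$, $\mathsf{h}_{\phi^n}(x)=\int_0^\infty t^n\,P(x,\mathrm{d}t)$ for $\mu$-a.e. $x\in X$. Moreover, if $C_\phi^n$ is densely defined for every $n\in\mathbb{Z}_+$, then for $\mu$-a.e. $x\in X$ the sequence $\{\mathsf{h}_{\phi^n}(x)\}_{n=0}^\infty$ is a Stieltjes moment sequence with representing measure $P(x,\cdot)$.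
   Context: $\mathbb{R}_+=[0,\infty)$, $\mathbb{Z}_+=\{0,1,2,\dots\}$. Conventions: $0\cdot\infty=0$, $1/0=\infty$, $0/0=1$. Nonsingular transformation: $\phi^{-1}(\Delta)\in\mathscr{A}$ for $\Delta\in\mathscr{A}$ and $\mu(\phi^{-1}(\Delta))=0$ when $\mu(\Delta)=0$. $\phi^n$ is the $n$-fold composition ($\phi^0=\mathrm{id}_X$), and $\mathsf{h}_{\phi^n}$ is the Radon–Nikodym derivative of $\Delta\mapsto\mu((\phi^n)^{-1}(\Delta))$ w.r.t. $\mu$. $C_\phi f=f\circ\phi$ on $\{f\in L^2(\mu):f\circ\phi\in L^2(\mu)\}$. $\mathsf{E}(f)$ is the conditional expectation of an $\mathscr{A}$-measurable $f\colon X\to[0,\infty]$ w.r.t. $\phi^{-1}(\mathscr{A})$: the a.e. unique $\phi^{-1}(\mathscr{A})$-measurable function with $\int(g\circ\phi)f\,\mathrm{d}\mu=\int(g\circ\phi)\mathsf{E}(f)\,\mathrm{d}\mu$ for every $\mathscr{A}$-measurable $g\ge0$. An $\mathscr{A}$-measurable family of probability measures: each $P(x,\cdot)$ a Borel probability measure on $\mathbb{R}_+$, each $P(\cdot,\sigma)$ $\mathscr{A}$-measurable. A sequence $\{a_n\}_{n\ge0}$ is a Stieltjes moment sequence with representing measure $\nu$ if $\nu$ is a Borel measure on $\mathbb{R}_+$ with $a_n=\int_0^\infty s^n\nu(\mathrm{d}s)$ for all $n$. *)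

From HB Require Import structures.
From mathcomp Require Import all_boot all_order all_algebra.
From mathcomp Require Import all_classical all_reals.
From mathcomp Require Import all_analysis measurable_realfun.

Set Implicit Arguments.
Unset Strict Implicit.
Unset Printing Implicit Defensive.

Import Order.TTheory GRing.Theory Num.Theory.
Local Open Scope classical_set_scope.
Local Open Scope ring_scope.
Local Open Scope ereal_scope.

Section Defs.
Context (R : realType) (d : measure_display) (T : measurableType d).
Implicit Types (mu : {measure set T -> \bar R}) (phi : T -> T).

Definition nonsingular mu phi :=
  measurable_fun setT phi /\
  forall A : set T, measurable A -> mu A = 0 -> mu (phi @^-1` A) = 0.

Definition RN_deriv_iter mu phi (n : nat) (h : T -> \bar R) :=
  measurable_fun setT h /\ (forall x, 0 <= h x) /\
  forall A : set T, measurable A ->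
    mu (iter n phi @^-1` A) = \int[mu]_(x in A) h x.

(* f is phi^{-1}(A)-measurable *)
Definition preim_measurable phi (f : T -> \bar R) :=
  forall B : set (\bar R), measurable B ->
    exists D : set T, measurable D /\ f @^-1` B = phi @^-1` D.

(* e is (a version of) the conditional expectation E(f) of f w.r.t.
   phi^{-1}(A) *)
Definition is_condexp mu phi (f e : T -> \bar R) :=
  preim_measurable phi e /\ (forall x, 0 <= e x) /\
  forall g : T -> \bar R, measurable_fun setT g -> (forall x, 0 <= g x) ->
    \int[mu]_x (g (phi x) * f x) = \int[mu]_x (g (phi x) * e x).

Definition L2 mu (f : T -> R) :=
  measurable_fun setT f /\ \int[mu]_x ((`|f x| ^+ 2)%R)%:E < +oo.

Definition dom_Cphi_pow mu phi (n : nat) (f : T -> R) :=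
  forall k, (k <= n)%N -> L2 mu (f \o iter k phi).

Definition Cphi_pow_densely_defined mu phi (n : nat) :=
  forall f, L2 mu f -> forall eps : R, (0 < eps)%R ->
    exists g, dom_Cphi_pow mu phi n g /\
      \int[mu]_x ((`|f x - g x| ^+ 2)%R)%:E < eps%:E.
End Defs.

(* division in [0,oo] with the conventions 1/0 = oo, 0/0 = 1 *)
Definition ediv0 (R : realType) (a b : \bar R) : \bar R :=
  if b == 0 then (if a == 0 then 1 else +oo) else a * b^-1.

(* {a_n} is a Stieltjes moment sequence (of reals) with representing
   measure nu, a Borel measure on R_+ (here: a measure on R, integrated
   over [0, oo)) *)
Definition Stieltjes_rep (R : realType) (a : nat -> \bar R)
    (nu : {measure set R -> \bar R}) :=
  (forall n, a n \is a fin_num) /\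
  forall n, a n = \int[nu]_(s in `[0%R, +oo[%classic) ((s ^+ n)%R)%:E.
Arguments ediv0 {R}.
Arguments Stieltjes_rep {R}.

From HB Require Import structures.
From mathcomp Require Import all_boot all_order all_algebra.
From mathcomp Require Import all_classical all_reals.
From mathcomp Require Import all_analysis measurable_realfun.

Set Implicit Arguments.
Unset Strict Implicit.
Unset Printing Implicit Defensive.

Import Order.TTheory GRing.Theory Num.Theory.
Local Open Scope classical_set_scope.
Local Open Scope ring_scope.
Local Open Scope ereal_scope.
Import HBNNSimple.

(* Write [h n] for the density of [mu \o (phi^n)^-1] and [M n x] for the
   [n]-th moment of [P x].  Changing variables along [phi] gives
   [\int_A h 1 * h n.+1 = \int ((\1_A * h 1) \o phi) * h n], and by induction
   [h n] may be replaced by [M n] there.  Condition (CC), tested against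
   [(\1_A * h 1) \o phi], says that two measures on [[0, +oo[] built from [P]
   agree on every Borel set; integrating [t ^+ n] against both turns the right
   hand side into [\int ((\1_A * M n.+1) \o phi) = \int_A h 1 * M n.+1].
   Since [A] is arbitrary and [0 < h 1 < +oo] a.e., [h n.+1 = M n.+1] a.e.
   Finiteness of [h n] comes from the density of the domain of [C_phi^n]: if
   [h n = +oo] on a set [C] of finite positive measure, every [g] in that
   domain vanishes a.e. on [C], so [\1_C] cannot be approximated. *)

Lemma measurable_iter (d : measure_display) (T : measurableType d)
    (f : T -> T) (n : nat) :
  measurable_fun setT f -> measurable_fun setT (iter n f).
Proof.
move=> mf; elim: n => [|n IH]; first exact: measurable_id.
exact: measurableT_comp.
Qed.

Lemma integral_mkindic (R : realType) (d : measure_display)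
    (T : measurableType d) (mu : {measure set T -> \bar R}) (A : set T)
    (f : T -> \bar R) :
  \int[mu]_(x in A) f x = \int[mu]_x (f x * (\1_A x)%:E).
Proof.
rewrite integral_mkcond; apply: eq_integral => x _.
by rewrite /patch indicE; case: ifP => _; rewrite ?mule1 ?mule0.
Qed.

Lemma nondecreasing_cvgeMl (R : realType) (c : \bar R) (u : (\bar R)^nat) :
  0 <= c -> (forall n, 0 <= u n) -> nondecreasing_seq u ->
  (fun n => c * u n) @ \oo --> c * limn u.
Proof.
move=> c0 u0 ndu.
have cu : u @ \oo --> limn u by exact: ereal_nondecreasing_is_cvgn.
move: c c0 => [c| |] //= c0; first exact: cvgeZl.
have [l0|l0] := eqVneq (limn u) 0.
  have u_eq0 n : u n = 0.
    apply/eqP; rewrite eq_le u0 andbT -l0.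
    have <- : ereal_sup (range u) = limn u.
      by apply/esym/cvg_lim => //; exact: ereal_nondecreasing_cvgn.
    by apply: ereal_sup_ubound; exists n.
  rewrite l0 mule0; under eq_fun do rewrite u_eq0 mule0; exact: cvg_cst.
rewrite (_ : (fun n => +oo * u n) = (fun n => cst +oo n * u n))//.
apply: cvgeM => //; last exact: cvg_cst.
by move: l0; case: (limn u).
Qed.

Section mixture_integral.
Context (R : realType) (d : measure_display) (T : measurableType d)
  (d' : measure_display) (S : measurableType d')
  (mu : {measure set T -> \bar R}) (K : T -> {measure set S -> \bar R}).
Hypothesis mK : forall U, measurable U -> measurable_fun setT (K ^~ U).
Variables (a : T -> \bar R) (b : S -> R).
Hypotheses (a0 : forall x, 0 <= a x) (ma : measurable_fun setT a).
Hypotheses (b0 : forall t, (0 <= b t)%R) (mb : measurable_fun setT b).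

(* The integral of [f] against the measure
   [U |-> \int[mu]_x a x * \int[K x]_(t in U) b t]; the measure itself is never
   built, two of them are compared through [mixture_integral_ext]. *)
Definition mixture_integral (f : S -> \bar R) :=
  \int[mu]_x \int[K x]_t (a x * (b t)%:E * f t).

Let ab_ge0 x t : 0 <= a x * (b t)%:E.
Proof. by rewrite mule_ge0 ?lee_fin. Qed.

Section nonneg.
Variable f : S -> \bar R.
Hypotheses (f0 : forall t, 0 <= f t) (mf : measurable_fun setT f).

Let mbf : measurable_fun setT (fun t => (b t)%:E * f t).
Proof. by apply: emeasurable_funM => //; exact/measurable_EFinP. Qed.

Lemma mixture_inner_integralE x :
  \int[K x]_t (a x * (b t)%:E * f t) = a x * \int[K x]_t ((b t)%:E * f t).
Proof.
under eq_integral do rewrite -muleA.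
by rewrite ge0_integralZl// => t _; rewrite mule_ge0// lee_fin.
Qed.

Lemma measurable_mixture_inner_integral :
  measurable_fun setT (fun x => \int[K x]_t (a x * (b t)%:E * f t)).
Proof.
under eq_fun do rewrite mixture_inner_integralE.
apply: emeasurable_funM => //; apply: measurable_fun_integral_kernel => //.
by move=> t; rewrite mule_ge0// lee_fin.
Qed.

End nonneg.

Lemma mixture_integral_nnsfun_approx f (f0 : forall t, 0 <= f t)
    (mf : measurable_fun setT f) :
  mixture_integral f =
  limn (fun n => mixture_integral (EFin \o nnsfun_approx measurableT mf n)).
Proof.
set f_ := nnsfun_approx measurableT mf.
have f_0 n t : 0 <= (EFin \o f_ n) t by rewrite /= lee_fin.
have mf_ n : measurable_fun setT (EFin \o f_ n) by exact/measurable_EFinP.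
have nd_f_ t : nondecreasing_seq (fun n => (f_ n t)%:E).
  by move=> m n mn; rewrite lee_fin; exact/lefP/nd_nnsfun_approx.
have nd_w x t : nondecreasing_seq (fun n => a x * (b t)%:E * (f_ n t)%:E).
  by move=> m n mn; rewrite lee_wpmul2l ?mule_ge0 ?lee_fin//; exact: nd_f_.
have mw x n : measurable_fun setT (fun t => a x * (b t)%:E * (f_ n t)%:E).
  apply: emeasurable_funM; last exact/measurable_EFinP.
  by apply: emeasurable_funM; [exact: measurable_cst|exact/measurable_EFinP].
have inner x : \int[K x]_t (a x * (b t)%:E * f t) =
    limn (fun n => \int[K x]_t (a x * (b t)%:E * (EFin \o f_ n) t)).
  rewrite -monotone_convergence//; last 2 first.
  - by move=> n; exact: mw.
  - by move=> n t _; rewrite !mule_ge0 ?lee_fin.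
  - apply: eq_integral => t _.
    have <- : limn (fun n => (f_ n t)%:E) = f t.
      by apply/cvg_lim => //; exact: cvg_nnsfun_approx.
    apply/esym/cvg_lim => //; apply: nondecreasing_cvgeMl; last exact: nd_f_.
    + by rewrite mule_ge0 ?lee_fin.
    + by move=> n; rewrite lee_fin.
rewrite /mixture_integral; under eq_integral do rewrite inner.
apply: monotone_convergence => //.
- by move=> n; exact: measurable_mixture_inner_integral (f_0 n) (mf_ n).
- by move=> n x _; apply: integral_ge0 => t _; rewrite !mule_ge0 ?lee_fin.
- move=> x _ m n mn; apply: ge0_le_integral => //.
  + by move=> t _; rewrite !mule_ge0 ?lee_fin.
  + exact: mw.
  + exact: mw.
  + by move=> t _; exact: (nd_w x t m n mn).
Qed.

Lemma mixture_integral_nnsfun (g : {nnsfun S >-> R}) :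
  mixture_integral (EFin \o g) =
  \sum_(r \in range g) r%:E * mixture_integral (EFin \o \1_(g @^-1` [set r])).
Proof.
pose G : R -> S -> \bar R := fun r => EFin \o \1_(g @^-1` [set r]).
have mG r : measurable_fun setT (G r).
  by apply/measurable_EFinP/measurable_indic; exact: measurable_funPTI.
have G0 r t : 0 <= G r t by rewrite /G /= lee_fin.
have rG0 r t : 0 <= r%:E * G r t by rewrite /G /= nnfun_muleindic_ge0.
have mrG r : measurable_fun setT (fun t => r%:E * G r t).
  by apply: emeasurable_funM => //; exact: measurable_cst.
have mw x r : measurable_fun setT (fun t => a x * (b t)%:E * (r%:E * G r t)).
  apply: emeasurable_funM => //.
  by apply: emeasurable_funM; [exact: measurable_cst|exact/measurable_EFinP].
have inner x : \int[K x]_t (a x * (b t)%:E * (EFin \o g) t) =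
    \sum_(r \in range g) \int[K x]_t (a x * (b t)%:E * (r%:E * G r t)).
  rewrite -ge0_integral_fsum//; last first.
    by move=> r t _; rewrite mule_ge0 ?rG0// mule_ge0 ?lee_fin.
  apply: eq_integral => t _; rewrite /= fimfunE -fsumEFin//.
  by rewrite ge0_mule_fsumr// => r; rewrite EFinM; exact: rG0.
rewrite /mixture_integral; under eq_integral do rewrite inner.
rewrite ge0_integral_fsum//; last 2 first.
- by move=> r; exact: measurable_mixture_inner_integral (rG0 r) (mrG r).
- move=> r x _; apply: integral_ge0 => t _.
  by rewrite mule_ge0 ?rG0// mule_ge0 ?lee_fin.
apply: eq_fsbigr => r; rewrite inE => -[t0 _ <-].
have g0 : (0 <= g t0)%R by [].
rewrite -ge0_integralZl ?lee_fin//; last 2 first.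
- apply: (measurable_mixture_inner_integral (G0 (g t0)) (mG (g t0))).
- move=> x _; apply: integral_ge0 => t _.
  by apply: mule_ge0; [exact: ab_ge0|exact: G0].
apply: eq_integral => x _; rewrite -ge0_integralZl ?lee_fin//; last 2 first.
- apply: emeasurable_funM; last exact: mG.
  by apply: emeasurable_funM; [exact: measurable_cst|exact/measurable_EFinP].
- by move=> t _; apply: mule_ge0 => //; rewrite lee_fin.
by apply: eq_integral => t _; rewrite muleCA.
Qed.

End mixture_integral.

Section mixture_integral_ext.
Context (R : realType) (d : measure_display) (T : measurableType d)
  (d' : measure_display) (S : measurableType d')
  (mu : {measure set T -> \bar R}) (K1 K2 : T -> {measure set S -> \bar R}).
Hypothesis mK1 : forall U, measurable U -> measurable_fun setT (K1 ^~ U).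
Hypothesis mK2 : forall U, measurable U -> measurable_fun setT (K2 ^~ U).
Variables (a1 a2 : T -> \bar R) (b1 b2 : S -> R).
Hypotheses (a10 : forall x, 0 <= a1 x) (ma1 : measurable_fun setT a1).
Hypotheses (a20 : forall x, 0 <= a2 x) (ma2 : measurable_fun setT a2).
Hypotheses (b10 : forall t, (0 <= b1 t)%R) (mb1 : measurable_fun setT b1).
Hypotheses (b20 : forall t, (0 <= b2 t)%R) (mb2 : measurable_fun setT b2).

Lemma mixture_integral_ext :
  (forall A, measurable A -> mixture_integral mu K1 a1 b1 (EFin \o \1_A) =
                             mixture_integral mu K2 a2 b2 (EFin \o \1_A)) ->
  forall f, (forall t, 0 <= f t) -> measurable_fun setT f ->
  mixture_integral mu K1 a1 b1 f = mixture_integral mu K2 a2 b2 f.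
Proof.
move=> eq_indic f f0 mf.
rewrite (mixture_integral_nnsfun_approx mu mK1 a10 ma1 b10 mb1 f0 mf).
rewrite (mixture_integral_nnsfun_approx mu mK2 a20 ma2 b20 mb2 f0 mf).
congr (limn _); apply/funext => n.
rewrite (mixture_integral_nnsfun mu mK1 a10 ma1 b10 mb1).
rewrite (mixture_integral_nnsfun mu mK2 a20 ma2 b20 mb2).
by apply: eq_fsbigr => r _; rewrite eq_indic//; exact: measurable_funPTI.
Qed.

End mixture_integral_ext.

Lemma ge0_integral_comp_density (R : realType) (d : measure_display)
    (T : measurableType d) (mu : {measure set T -> \bar R}) (psi : T -> T)
    (h : T -> \bar R) :
  measurable_fun setT psi -> measurable_fun setT h -> (forall x, 0 <= h x) ->
  (forall A, measurable A -> mu (psi @^-1` A) = \int[mu]_(x in A) h x) ->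
  forall f, (forall x, 0 <= f x) -> measurable_fun setT f ->
  \int[mu]_x f (psi x) = \int[mu]_x (f x * h x).
Proof.
(* Both sides are mixture integrals over Dirac kernels. *)
move=> mpsi mh h0 psi_density f f0 mf.
have mdirac U : measurable U -> measurable_fun setT (fun x : T => \d_x U).
  by move=> mU; exact: measurable_fun_dirac.
have mdirac_psi U : measurable U -> measurable_fun setT (fun x => \d_(psi x) U).
  move=> mU; rewrite (_ : (fun x => _) = (fun y => \d_y U) \o psi)//.
  by apply: measurableT_comp => //; exact: mdirac.
have lhsE g : measurable_fun setT g -> \int[mu]_x g (psi x) =
    mixture_integral mu (fun x => \d_(psi x)) (cst 1) (cst 1%R) g.
  move=> mg; apply: eq_integral => x _; under eq_integral do rewrite !mul1e.
  by rewrite integral_dirac// diracT mul1e.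
have rhsE g : measurable_fun setT g -> \int[mu]_x (g x * h x) =
    mixture_integral mu (fun x => \d_x) h (cst 1%R) g.
  move=> mg; apply: eq_integral => x _; under eq_integral do rewrite mule1.
  rewrite integral_dirac//; first by rewrite diracT mul1e muleC.
  exact: measurable_funeM.
rewrite (lhsE f)// (rhsE f)//; apply: mixture_integral_ext => //.
- exact: mdirac_psi.
- exact: mdirac.
- move=> A mA; have mA1 : measurable_fun setT (EFin \o \1_A : T -> \bar R).
    by apply/measurable_EFinP; exact: measurable_indic.
  rewrite -(lhsE _ mA1) -(rhsE _ mA1).
  transitivity (\int[mu]_x (\1_(psi @^-1` A) x)%:E).
    by apply: eq_integral => x _; rewrite /= !indicE.
  rewrite integral_indic ?setIT//; last first.
    by rewrite -[X in measurable X]setTI; exact: mpsi.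
  rewrite psi_density// integral_mkindic.
  by apply: eq_integral => x _; rewrite muleC.
Qed.

Section ge0_integral_ae_eq_on_bounded.
Context (R : realType) (d : measure_display) (T : measurableType d)
  (mu : {measure set T -> \bar R}) (f g : T -> \bar R).
Hypotheses (mf : measurable_fun setT f) (mg : measurable_fun setT g).
Hypothesis g0 : forall x, 0 <= g x.
Hypothesis fg : forall A, measurable A ->
  \int[mu]_(x in A) f x = \int[mu]_(x in A) g x.

Lemma ge0_integral_ae_eq_on_bounded (F : set T) (k : nat) :
  measurable F -> mu F < +oo ->
  {ae mu, forall x, (F `&` [set x | g x <= k%:R%:E]) x -> f x = g x}.
Proof.
move=> mF muF; set E := F `&` _.
have mE : measurable E.
  apply: measurableI => //; rewrite -[X in measurable X]setTI.
  exact: measurable_lee.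
have gE : mu.-integrable E g.
  apply/integrableP; split; first exact: measurable_funS mg.
  apply: (@le_lt_trans _ _ (\int[mu]_(x in E) k%:R%:E)).
    apply: ge0_le_integral => //.
    - by apply: measurableT_comp => //; exact: measurable_funS mg.
    - by move=> x [_ /=]; rewrite gee0_abs.
  rewrite integral_cst// lte_mul_pinfty ?lee_fin//.
  by rewrite (le_lt_trans _ muF)// le_measure ?inE//; exact: subIsetl.
have mfE : measurable_fun E f by exact: measurable_funS mf.
have gf : forall B, B `<=` E -> measurable B ->
    \int[mu]_(x in B) g x = \int[mu]_(x in B) f x by move=> B _ mB; rewrite fg.
by apply: filterS (integral_ae_eq mE gE mfE gf) => x + Ex => /(_ Ex).
Qed.

End ge0_integral_ae_eq_on_bounded.

Lemma sigma_finite_ge0_integral_ae_eq (R : realType) (d : measure_display)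
    (T : measurableType d) (mu : {measure set T -> \bar R})
    (f g : T -> \bar R) :
  sigma_finite setT mu ->
  measurable_fun setT f -> measurable_fun setT g ->
  (forall x, 0 <= f x) -> (forall x, 0 <= g x) ->
  (forall A, measurable A -> \int[mu]_(x in A) f x = \int[mu]_(x in A) g x) ->
  {ae mu, forall x, f x = g x}.
Proof.
move=> [F FT mF] mf mg f0 g0 fg.
have on_g_bounded : {ae mu, forall x i k,
    (F i `&` [set x | g x <= k%:R%:E]) x -> f x = g x}.
  apply: ae_foralln => i; apply: ae_foralln => k.
  exact: ge0_integral_ae_eq_on_bounded (mF i).1 (mF i).2.
have on_f_bounded : {ae mu, forall x i k,
    (F i `&` [set x | f x <= k%:R%:E]) x -> g x = f x}.
  apply: ae_foralln => i; apply: ae_foralln => k.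
  apply: ge0_integral_ae_eq_on_bounded (mF i).1 (mF i).2 => //.
  by move=> A mA; rewrite fg.
apply: filterS2 on_g_bounded on_f_bounded => x fg_g gf_f.
have [i _ Fix] : bigcup [set: nat] F x by rewrite -FT.
have bounded (y : \bar R) : y \is a fin_num -> exists k : nat, y <= k%:R%:E.
  move=> yfin; exists (Num.truncn (fine y)).+1.
  by rewrite -(fineK yfin) lee_fin ltW// truncnS_gt.
have [/bounded[k fk]|f_infty] := boolP (f x \is a fin_num).
  by rewrite (gf_f i k).
have [/bounded[k gk]|g_infty] := boolP (g x \is a fin_num).
  by rewrite (fg_g i k).
by move: f_infty g_infty (f0 x) (g0 x); case: (f x); case: (g x).
Qed.

Lemma nonsingular_ae_comp (R : realType) (d : measure_display)
    (T : measurableType d) (mu : {measure set T -> \bar R}) (phi : T -> T)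
    (Q : T -> Prop) :
  nonsingular mu phi -> {ae mu, forall x, Q x} -> {ae mu, forall x, Q (phi x)}.
Proof.
move=> [mphi phi_null] [N [mN muN QN]]; exists (phi @^-1` N); split.
- by rewrite -[X in measurable X]setTI; exact: mphi.
- exact: phi_null.
- by move=> x /= nQ; apply: QN.
Qed.

Lemma measurable_condexp (R : realType) (d : measure_display)
    (T : measurableType d) (mu : {measure set T -> \bar R}) (phi : T -> T)
    (f e : T -> \bar R) :
  measurable_fun setT phi -> is_condexp mu phi f e -> measurable_fun setT e.
Proof.
move=> mphi [e_phi _] _ B mB; have [D [mD ->]] := e_phi B mB.
by rewrite setTI -[X in measurable X]setTI; exact: mphi.
Qed.

Section RN_deriv_iter.
Context (R : realType) (d : measure_display) (T : measurableType d)
  (mu : {measure set T -> \bar R}) (phi : T -> T) (h : nat -> T -> \bar R).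
Hypothesis mphi : measurable_fun setT phi.
Hypothesis RN : forall n, RN_deriv_iter mu phi n (h n).

Lemma ge0_integral_comp_iter n (g : T -> \bar R) :
  (forall x, 0 <= g x) -> measurable_fun setT g ->
  \int[mu]_x g (iter n phi x) = \int[mu]_x (g x * h n x).
Proof.
move=> g0 mg; have [mh [h0 hRN]] := RN n.
exact: ge0_integral_comp_density (measurable_iter n mphi) mh h0 hRN g g0 mg.
Qed.

Lemma ge0_integral_RN_deriv_iterS n (g : T -> \bar R) :
  (forall x, 0 <= g x) -> measurable_fun setT g ->
  \int[mu]_x (g x * h n.+1 x) = \int[mu]_x (g (phi x) * h n x).
Proof.
move=> g0 mg; rewrite -ge0_integral_comp_iter// -ge0_integral_comp_iter//.
by apply: measurableT_comp.
Qed.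

Lemma RN_deriv_iter_infty_null n (C : set T) :
  Cphi_pow_densely_defined mu phi n -> measurable C -> mu C < +oo ->
  (forall x, C x -> h n x = +oo) -> mu C = 0.
Proof.
move=> dense mC muC_fin hC; have [mh [h0 _]] := RN n.
apply/eqP; apply/negPn/negP => muC_neq0.
set c := fine (mu C).
have c_gt0 : (0 < c)%R.
  by apply: fine_gt0; rewrite muC_fin andbT lt0e muC_neq0 measure_ge0.
have L2C : L2 mu (\1_C : T -> R).
  split; first exact: measurable_indic.
  rewrite (_ : (fun x => _) = fun x => (\1_C x)%:E).
    by rewrite integral_indic// setIT.
  apply/funext => x; rewrite indicE.
  by case: (x \in C); rewrite /= ?normr1 ?normr0 ?expr1n ?expr0n.
have [g [g_dom g_close]] := dense _ L2C c c_gt0.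
have mg : measurable_fun setT g := (g_dom 0%N (leq0n n)).1.
pose G x : \bar R := ((`|g x| ^+ 2)%R)%:E.
have mG : measurable_fun setT G.
  by apply/measurable_EFinP; apply: measurable_funX; exact: measurableT_comp.
have G0 x : 0 <= G x by rewrite lee_fin.
(* [g \o phi^n] is square integrable and [h n = +oo] on [C], so [g = 0] a.e.
   on [C]; hence [g] stays at distance at least [mu C] from [\1_C]. *)
have intC_G : \int[mu]_(x in C) G x = 0.
  have : \int[mu]_(x in C) G x * +oo < +oo.
    rewrite -ge0_integralZr//; last exact: measurable_funS mG.
    rewrite (eq_integral (fun x => G x * h n x)); last first.
      by move=> x /[!inE] Cx; rewrite hC.
    apply: le_lt_trans (g_dom n (leqnn n)).2.
    rewrite (ge0_integral_comp_iter n G0 mG).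
    apply: ge0_subset_integral => //; first exact: emeasurable_funM mG mh.
    by move=> x _; rewrite mule_ge0.
  move=> intC_fin; apply/eqP; rewrite eq_le integral_ge0 ?andbT// leNgt.
  by apply/negP => intC_gt0; rewrite gt0_muley// ltxx in intC_fin.
have g0_aeC : ae_eq mu C G (cst 0).
  apply/(ae_eq_integral_abs mu mC); first exact: measurable_funS mG.
  by rewrite -[RHS]intC_G; apply: eq_integral => x _; rewrite gee0_abs.
have mdist :
    measurable_fun setT (fun x => ((`|\1_C x - g x| ^+ 2)%R)%:E : \bar R).
  apply/measurable_EFinP; apply: measurable_funX; apply: measurableT_comp => //.
  by apply: measurable_funB => //; exact: measurable_indic.
have distC : \int[mu]_(x in C) ((`|\1_C x - g x| ^+ 2)%R)%:E = c%:E.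
  rewrite (@ae_eq_integral _ _ _ mu C (cst 1))//.
  - by rewrite integral_cst// mul1e /c fineK// ge0_fin_numE.
  - exact: measurable_funS mdist.
  apply: filterS g0_aeC => x gx Cx; move: (gx Cx) => /eqP.
  rewrite /G eqe expf_eq0 /= normr_eq0 => /eqP ->.
  by rewrite indicE mem_set// subr0 normr1 expr1n.
have : c%:E <= \int[mu]_x ((`|\1_C x - g x| ^+ 2)%R)%:E.
  by rewrite -distC; apply: ge0_subset_integral.
by move=> /(lt_le_trans g_close); rewrite ltxx.
Qed.

Lemma RN_deriv_iter_fin_ae n : sigma_finite setT mu ->
  Cphi_pow_densely_defined mu phi n -> {ae mu, forall x, h n x < +oo}.
Proof.
move=> [F FT mF] dense; have [mh [h0 _]] := RN n.
have fin_on i : {ae mu, forall x, F i x -> h n x < +oo}.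
  have mC : measurable (F i `&` [set x | h n x = cst +oo x]).
    apply: measurable_eqe; first exact: (mF i).1.
    - exact: measurable_funS mh.
    - exact: measurable_cst.
  exists (F i `&` [set x | h n x = cst +oo x]); split => //.
  - apply: (RN_deriv_iter_infty_null dense mC); last by move=> x [].
    apply: le_lt_trans (mF i).2; apply: le_measure; rewrite ?inE//.
    exact: (mF i).1.
  - move=> x /= /not_implyP[Fix h_infty]; split => //.
    by move: h_infty (h0 x); case: (h n x) => //= r; rewrite ltry.
apply: filterS (ae_foralln fin_on) => x h_fin.
have [i _ Fix] : bigcup setT F x by rewrite -FT.
exact: h_fin i Fix.
Qed.

End RN_deriv_iter.

Definition moment (R : realType) (d : measure_display) (T : measurableType d)
    (P : T -> {measure set R -> \bar R}) (n : nat) (x : T) : \bar R :=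
  \int[P x]_(t in `[0%R, +oo[%classic) ((t ^+ n)%R)%:E.

Section moments.
Context (R : realType) (d : measure_display) (T : measurableType d)
  (mu : {measure set T -> \bar R}) (phi : T -> T)
  (P : R.-pker T ~> R) (h : nat -> T -> \bar R).
Hypothesis sfin : sigma_finite setT mu.
Hypothesis nsing : nonsingular mu phi.
Hypothesis RN : forall n, RN_deriv_iter mu phi n (h n).
Hypothesis h1_pos_fin : {ae mu, forall x, 0 < h 1%N x < +oo}.
Hypothesis P_neg : forall x, P x `]-oo, 0%R[%classic = 0.
Hypothesis CC : forall sigma : set R, measurable sigma ->
  sigma `<=` `[0%R, +oo[%classic ->
  exists e, is_condexp mu phi (fun x => P x sigma) e /\
    {ae mu, forall x, e x =
       ediv0 (\int[P (phi x)]_(t in sigma) t%:E) (h 1%N (phi x))}.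

Local Notation D := (`[0%R, +oo[%classic : set R).

Let mphi : measurable_fun setT phi. Proof. exact: nsing.1. Qed.
Let mh n : measurable_fun setT (h n). Proof. exact: (RN n).1. Qed.
Let h0 n x : 0 <= h n x. Proof. exact: (RN n).2.1. Qed.
Let mP U : measurable U -> measurable_fun setT (fun x => P x U).
Proof. exact: measurable_kernel. Qed.
Let mPphi U : measurable U -> measurable_fun setT (fun x => P (phi x) U).
Proof. by move=> mU; exact: measurableT_comp (mP mU) mphi. Qed.

Let D_ge0 t : D t -> (0 <= t)%R.
Proof. by rewrite /= in_itv /= andbT. Qed.

Lemma kernel_nonneg_half_line x : P x D = 1.
Proof.
have := @prob_kernel _ _ _ _ _ P x.
rewrite -(setUv D) measureU//; last 2 first.
- exact: measurableC.
- by rewrite setICr.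
by rewrite setCitvr [X in _ + X](_ : _ = 0) ?adde0//; exact: P_neg.
Qed.

Lemma moment0 x : moment P 0 x = 1.
Proof.
rewrite /moment; under eq_integral do rewrite expr0.
by rewrite integral_cst// kernel_nonneg_half_line mul1e.
Qed.

Lemma moment_ge0 n x : 0 <= moment P n x.
Proof. by apply: integral_ge0 => t /D_ge0 t0; rewrite lee_fin exprn_ge0. Qed.

Lemma RN_deriv_iter0_ae : {ae mu, forall x, h 0 x = moment P 0 x}.
Proof.
have : {ae mu, forall x, h 0 x = cst 1 x}.
  apply: (sigma_finite_ge0_integral_ae_eq sfin (mh 0) (measurable_cst _)).
  - exact: h0.
  - by move=> x; exact: lee01.
  - by move=> A mA; rewrite -(RN 0).2.2// integral_cst// mul1e.
by apply: filterS => x ->; rewrite moment0.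
Qed.

Lemma momentE n x :
  moment P n x = \int[P x]_t ((\1_D t)%:E * ((`|t| ^+ n)%R)%:E).
Proof.
rewrite /moment [LHS]integral_mkindic; apply: eq_integral => t _.
rewrite indicE; have [/[!inE] /D_ge0 t0|_] := boolP (t \in D).
  by rewrite mule1 mul1e ger0_norm.
by rewrite mule0 mul0e.
Qed.

Lemma momentSE n x :
  moment P n.+1 x = \int[P x]_t ((t * \1_D t)%:E * ((`|t| ^+ n)%R)%:E).
Proof.
rewrite /moment [LHS]integral_mkindic; apply: eq_integral => t _.
rewrite indicE; have [/[!inE] /D_ge0 t0|_] := boolP (t \in D).
  by rewrite mule1 mulr1 ger0_norm// -EFinM exprS.
by rewrite mulr0 mule0 mul0e.
Qed.

Let indicD_ge0 t : (0 <= \1_D t :> R)%R. Proof. by rewrite indicE. Qed.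
Let mindicD : measurable_fun setT (\1_D : R -> R).
Proof. exact: measurable_indic. Qed.
Let tindicD_ge0 t : (0 <= t * \1_D t)%R.
Proof.
rewrite indicE; have [/[!inE] /D_ge0 t0|_] := boolP (t \in D).
  by rewrite mulr1.
by rewrite mulr0.
Qed.
Let mtindicD : measurable_fun setT (fun t : R => t * \1_D t)%R.
Proof. exact: measurable_funM. Qed.

Let weight (A : set T) (y : T) : \bar R := (\1_A y)%:E * h 1%N y.
Let mweight A : measurable A -> measurable_fun setT (weight A).
Proof.
move=> mA; apply: emeasurable_funM => //.
by apply/measurable_EFinP; exact: measurable_indic.
Qed.
Let weight_ge0 A y : 0 <= weight A y.
Proof. by rewrite mule_ge0 ?lee_fin. Qed.

Let mweight_phi A : measurable A -> measurable_fun setT (weight A \o phi).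
Proof. by move=> mA; apply: measurableT_comp => //; exact: mweight. Qed.
Let indic_phi0 A x : 0 <= (\1_A (phi x))%:E :> \bar R.
Proof. by rewrite lee_fin. Qed.
Let mindic_phi A : measurable A ->
  measurable_fun setT (fun x => (\1_A (phi x))%:E : \bar R).
Proof.
move=> mA; apply/measurable_EFinP.
exact: measurableT_comp (@measurable_indic _ _ _ setT A mA) mphi.
Qed.

Lemma condexp_mixture_indic (A : set T) (sigma : set R) :
  measurable A -> measurable sigma ->
  mixture_integral mu P (weight A \o phi) \1_D (EFin \o \1_sigma) =
  mixture_integral mu (fun x => P (phi x)) (fun x => (\1_A (phi x))%:E)
    (fun t => t * \1_D t)%R (EFin \o \1_sigma).
Proof.
(* (CC) for [sigma `&` D], tested against [weight A]; on the full-measure set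
   where [0 < h 1 (phi x) < +oo] the conventions of [ediv0] play no role. *)
move=> mA ms; set s := sigma `&` D.
have ms' : measurable s by exact: measurableI.
have [e [econd e_ae]] := CC ms' (@subIsetr _ _ _).
have me := measurable_condexp mphi econd.
have [_ [_ e_int]] := econd.
have mindic_s : measurable_fun setT (EFin \o \1_sigma : R -> \bar R).
  by apply/measurable_EFinP; exact: measurable_indic.
have indic_s0 (t : R) : 0 <= (EFin \o (\1_sigma : R -> R)) t.
  by rewrite /= lee_fin.
transitivity (\int[mu]_x (weight A (phi x) * P x s)).
  apply: eq_integral => x _.
  rewrite (mixture_inner_integralE P (fun y => weight_ge0 A (phi y)) indicD_ge0
    mindicD indic_s0 mindic_s).
  congr (_ * _); rewrite -(setIT s) -integral_indic//.
  by apply: eq_integral => t _; rewrite /s indicI /= -EFinM mulrC.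
rewrite (e_int _ (mweight mA) (weight_ge0 A)).
apply: ae_eq_integral => //.
- exact: emeasurable_funM (mweight_phi mA) me.
- exact: (measurable_mixture_inner_integral mPphi (indic_phi0 A) (mindic_phi mA)
    tindicD_ge0 mtindicD indic_s0 mindic_s).
apply: filterS2 e_ae (nonsingular_ae_comp nsing h1_pos_fin).
move=> x -> /andP[h1_gt0 h1_fin] _.
rewrite (mixture_inner_integralE (fun y => P (phi y)) (indic_phi0 A)
  tindicD_ge0 mtindicD indic_s0 mindic_s).
have -> : \int[P (phi x)]_t ((t * \1_D t)%:E * (EFin \o \1_sigma) t) =
    \int[P (phi x)]_(t in s) t%:E.
  rewrite [RHS]integral_mkindic; apply: eq_integral => t _.
  by rewrite /s indicI /= -!EFinM -mulrA (mulrC (\1_D t)).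
rewrite /ediv0 (gt_eqF h1_gt0) /weight /=.
move: h1_gt0 h1_fin; case: (h 1%N (phi x)) => // r; rewrite lte_fin => r0 _.
rewrite inver (gt_eqF r0) -muleA; congr (_ * _).
by rewrite muleCA -EFinM mulfV ?gt_eqF// mule1.
Qed.

Lemma measurable_moment n : measurable_fun setT (moment P n).
Proof.
rewrite (_ : moment P n =
    fun x => \int[P x]_t ((\1_D t)%:E * ((`|t| ^+ n)%R)%:E)).
  apply: measurable_fun_integral_kernel.
  - exact: mP.
  - by move=> t; rewrite mule_ge0 ?lee_fin.
  - apply: emeasurable_funM; apply/measurable_EFinP => //.
    by apply: measurable_funX; exact: normr_measurable.
by apply/funext => x; rewrite momentE.
Qed.

Lemma moment_transfer n (A : set T) : measurable A ->
  \int[mu]_x (weight A (phi x) * moment P n x) =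
  \int[mu]_x ((\1_A (phi x))%:E * moment P n.+1 (phi x)).
Proof.
move=> mA.
have pow0 (t : R) : 0 <= ((`|t| ^+ n)%R)%:E :> \bar R by rewrite lee_fin.
have mpow : measurable_fun setT (fun t : R => ((`|t| ^+ n)%R)%:E : \bar R).
  by apply/measurable_EFinP; apply: measurable_funX; exact: normr_measurable.
transitivity (mixture_integral mu P (weight A \o phi) \1_D
                (fun t => ((`|t| ^+ n)%R)%:E)).
  apply: eq_integral => x _.
  rewrite (mixture_inner_integralE P (fun y => weight_ge0 A (phi y)) indicD_ge0
    mindicD pow0 mpow).
  by congr (_ * _); exact: momentE.
rewrite (mixture_integral_ext mP mPphi (fun x => weight_ge0 A (phi x))
  (mweight_phi mA) (indic_phi0 A) (mindic_phi mA) indicD_ge0 mindicD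
  tindicD_ge0 mtindicD (fun sigma => condexp_mixture_indic mA) pow0 mpow).
apply: eq_integral => x _.
by rewrite (mixture_inner_integralE (fun y => P (phi y)) (indic_phi0 A)
  tindicD_ge0 mtindicD pow0 mpow) momentSE.
Qed.

Lemma RN_deriv_iterS_ae n :
  {ae mu, forall x, h n x = moment P n x} ->
  {ae mu, forall x, h n.+1 x = moment P n.+1 x}.
Proof.
move=> IH.
have mom_phi_meas A : measurable A ->
    measurable_fun setT (fun y => (\1_A y)%:E * moment P n.+1 y).
  move=> mA; apply: emeasurable_funM; last exact: measurable_moment.
  by apply/measurable_EFinP; exact: measurable_indic.
have setint_eq A : measurable A ->
    \int[mu]_(x in A) (h 1%N x * h n.+1 x) =
    \int[mu]_(x in A) (h 1%N x * moment P n.+1 x).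
  move=> mA; rewrite [LHS]integral_mkindic [RHS]integral_mkindic.
  transitivity (\int[mu]_x (weight A x * h n.+1 x)).
    by apply: eq_integral => x _; rewrite /weight muleC muleA.
  rewrite (ge0_integral_RN_deriv_iterS mphi RN n (weight_ge0 A) (mweight mA)).
  transitivity (\int[mu]_x (weight A (phi x) * moment P n x)).
    apply: ae_eq_integral => //.
    - exact: emeasurable_funM (mweight_phi mA) (mh n).
    - exact: emeasurable_funM (mweight_phi mA) (measurable_moment n).
    - by apply: filterS IH => x -> _.
  have mom_phi0 y : 0 <= (\1_A y)%:E * moment P n.+1 y.
    by rewrite mule_ge0 ?lee_fin ?moment_ge0.
  rewrite moment_transfer//; transitivity
    (\int[mu]_x ((fun y => (\1_A y)%:E * moment P n.+1 y) (iter 1 phi x))).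
    by [].
  rewrite (ge0_integral_comp_iter mphi RN 1 mom_phi0 (mom_phi_meas A mA)).
  by apply: eq_integral => x _; rewrite [LHS]muleC [LHS]muleCA [LHS]muleC.
have := sigma_finite_ge0_integral_ae_eq sfin
  (emeasurable_funM (mh 1) (mh n.+1))
  (emeasurable_funM (mh 1) (measurable_moment n.+1))
  (fun x => mule_ge0 (h0 1 x) (h0 n.+1 x))
  (fun x => mule_ge0 (h0 1 x) (moment_ge0 n.+1 x)) setint_eq.
apply: filterS2 h1_pos_fin => x /andP[h1_gt0 h1_fin].
move: h1_gt0 h1_fin; case: (h 1%N x) => // r; rewrite lte_fin => r0 _ hr.
have := congr1 (fun z => (r^-1)%:E * z) hr.
by rewrite !muleA -EFinM mulVf ?gt_eqF// !mul1e.
Qed.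

End moments.

Theorem theorem17 (R : realType) (d : measure_display) (T : measurableType d)
    (mu : {measure set T -> \bar R}) (phi : T -> T)
    (P : R.-pker T ~> R) (h : nat -> T -> \bar R) :
  sigma_finite setT mu ->
  nonsingular mu phi ->
  (forall n, RN_deriv_iter mu phi n (h n)) ->
  {ae mu, forall x, 0 < h 1%N x < +oo} ->
  (forall x, P x `]-oo, 0%R[%classic = 0) ->
  (forall sigma : set R, measurable sigma -> sigma `<=` `[0%R, +oo[%classic ->
     exists e, is_condexp mu phi (fun x => P x sigma) e /\
       {ae mu, forall x, e x =
          ediv0 (\int[P (phi x)]_(t in sigma) t%:E) (h 1%N (phi x))}) ->
  (forall n : nat, {ae mu, forall x,
      h n x = \int[P x]_(t in `[0%R, +oo[%classic) ((t ^+ n)%R)%:E}) /\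
  ((forall n : nat, Cphi_pow_densely_defined mu phi n) ->
     {ae mu, forall x, Stieltjes_rep (fun n => h n x) (P x)}).
Proof.
move=> sfin nsing RN h1_pos_fin P_neg CC.
have h_moment n : {ae mu, forall x, h n x = moment P n x}.
  elim: n => [|n IH]; first exact: (RN_deriv_iter0_ae sfin RN P_neg).
  exact: (RN_deriv_iterS_ae sfin nsing RN h1_pos_fin CC IH).
split=> [//|dense].
have h_fin n := RN_deriv_iter_fin_ae nsing.1 RN sfin (dense n).
apply: filterS2 (ae_foralln h_moment) (ae_foralln h_fin) => x hx h_finx.
split=> n; last exact: hx.
by rewrite ge0_fin_numE ?h_finx//; exact: (RN n).2.1.
Qed.
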